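(* Let $\Gamma,\Delta$ be finite multisets of formulas and $\Sigma$ a finite multiset of outmost-boxed formulas. For every propositional variable $p$ and every agent symbol $a$ there exists a formula $A$ such that: (i) $\mathsf{V}(A)\subseteq\mathsf{V}(\Sigma\cup\Gamma\cup\Delta)\setminus\{p\}$ and $\mathsf{Agt}(A)\subseteq\mathsf{Agt}(\Sigma\cup\Gamma\cup\Delta)\setminus\{a\}$; (ii) $\mathsf{G}(\mathbf{KT}^+_D)\vdash\Sigma\mid\Gamma,A\Rightarrow\Delta$; (iii) for all finite multisets $\Pi,\Lambda$ of formulas and every finite multiset $\Theta$ of outmost-boxed formulas with $p\notin\mathsf{V}(\Pi\cup\Lambda\cup\Theta)$ and $a\notin\mathsf{Agt}(\Pi\cup\Lambda\cup\Theta)$: if $\mathsf{G}(\mathbf{KT}^+_D)\vdash\Theta,\Sigma\mid\Pi,\Gamma\Rightarrow\Delta,\Lambda$, then $\mathsf{G}(\mathbf{KT}^+_D)\vdash\emptyset\mid\Theta,\Pi\Rightarrow A,\Lambda$.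
   Context: Language: fix a finite nonempty set $\mathsf{Agt}$ of agent symbols and a countable set $\mathsf{Prop}$ of propositional variables; $\mathsf{Grp}$ is the set of nonempty subsets of $\mathsf{Agt}$. Formulas: $\alpha::=p\mid\bot\mid\alpha\wedge\alpha\mid\alpha\vee\alpha\mid\alpha\rightarrow\alpha\mid\neg\alpha\mid D_G\alpha$ with $p\in\mathsf{Prop}$, $G\in\mathsf{Grp}$. $\mathsf{V}(\cdot)$ is the set of propositional variables occurring, $\mathsf{Agt}(\cdot)$ the set of agent symbols occurring (the union of all $G$ with $D_G$ occurring); for multisets these are unions. An outmost-boxed formula is one of the form $D_G\gamma$. Calculus $\mathsf{G}(\mathbf{KT}^+_D)$: a T-sequent $\Sigma\mid\Gamma\Rightarrow\Delta$ consists of finite multisets $\Gamma,\Delta$ of formulas and a finite multiset $\Sigma$ of outmost-boxed formulas; $\vdash S$ means $S$ is the root of a finite tree built from initial sequents by the rules. Initial sequents: $\Sigma\mid\Gamma,p\Rightarrow p,\Delta$ ($p\in\mathsf{Prop}$) and $\Sigma\mid\bot,\Gamma\Rightarrow\Delta$. Propositional rules (with $\Sigma$ unchanged): $(R\wedge)$ from $\Sigma\mid\Gamma\Rightarrow\Delta,\alpha_1$ and $\Sigma\mid\Gamma\Rightarrow\Delta,\alpha_2$ infer $\Sigma\mid\Gamma\Rightarrow\Delta,\alpha_1\wedge\alpha_2$; $(L\wedge)$ from $\Sigma\mid\alpha_1,\alpha_2,\Gamma\Rightarrow\Delta$ infer $\Sigma\mid\alpha_1\wedge\alpha_2,\Gamma\Rightarrow\Delta$;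 $(R\vee)$ from $\Sigma\mid\Gamma\Rightarrow\Delta,\alpha_1,\alpha_2$ infer $\Sigma\mid\Gamma\Rightarrow\Delta,\alpha_1\vee\alpha_2$; $(L\vee)$ from $\Sigma\mid\alpha_1,\Gamma\Rightarrow\Delta$ and $\Sigma\mid\alpha_2,\Gamma\Rightarrow\Delta$ infer $\Sigma\mid\alpha_1\vee\alpha_2,\Gamma\Rightarrow\Delta$; $(R\rightarrow)$ from $\Sigma\mid\alpha_1,\Gamma\Rightarrow\Delta,\alpha_2$ infer $\Sigma\mid\Gamma\Rightarrow\Delta,\alpha_1\rightarrow\alpha_2$; $(L\rightarrow)$ from $\Sigma\mid\Gamma\Rightarrow\Delta,\alpha_1$ and $\Sigma\mid\alpha_2,\Gamma\Rightarrow\Delta$ infer $\Sigma\mid\alpha_1\rightarrow\alpha_2,\Gamma\Rightarrow\Delta$; $(R\neg)$ from $\Sigma\mid\alpha,\Gamma\Rightarrow\Delta$ infer $\Sigma\mid\Gamma\Rightarrow\Delta,\neg\alpha$; $(L\neg)$ from $\Sigma\mid\Gamma\Rightarrow\Delta,\alpha$ infer $\Sigma\mid\neg\alpha,\Gamma\Rightarrow\Delta$. Modal rules: $(D_K^+)$: from $\emptyset\mid\alpha_1,\dots,\alpha_n\Rightarrow\beta$ ($n\ge0$) infer $\Sigma,D_{G_1}\alpha_1,\dots,D_{G_n}\alpha_n\mid\Pi\Rightarrow D_G\beta,\Omega$, provided $G_i\subseteq G$ for all $i$, $\Sigma$ consists only of formulas $D_H\gamma$ with $H\not\subseteq G$,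 $\Pi$ consists only of propositional variables and $\bot$, and $\Omega$ only of propositional variables, $\bot$ and outmost-boxed formulas; $(D_T^+)$: from $D_G\alpha,\Sigma\mid\Gamma,\alpha\Rightarrow\Delta$ infer $\Sigma\mid\Gamma,D_G\alpha\Rightarrow\Delta$. *)

From Stdlib Require Import List Permutation.
From mathcomp Require Import all_boot.
Set Implicit Arguments.
Unset Strict Implicit.
Unset Printing Implicit Defensive.

Section Logic.
Variable Agt : finType.

Definition grp := {G : {set Agt} | G != set0}.

Inductive form : Type :=
| Var : nat -> form
| Bot : form
| And : form -> form -> form
| Or  : form -> form -> form
| Imp : form -> form -> form
| Neg : form -> form
| Box : grp -> form -> form.

Fixpoint var_occ (q : nat) (f : form) : Prop :=
  match f with
  | Var r => q = r
  | Bot => False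
  | And f1 f2 | Or f1 f2 | Imp f1 f2 => var_occ q f1 \/ var_occ q f2
  | Neg f1 => var_occ q f1
  | Box _ f1 => var_occ q f1
  end.

Fixpoint agt_occ (b : Agt) (f : form) : Prop :=
  match f with
  | Var _ | Bot => False
  | And f1 f2 | Or f1 f2 | Imp f1 f2 => agt_occ b f1 \/ agt_occ b f2
  | Neg f1 => agt_occ b f1
  | Box G f1 => b \in sval G \/ agt_occ b f1
  end.

(* An outmost-boxed formula D_G gamma is represented by the pair (G, gamma). *)
Definition boxed (x : grp * form) : form := Box x.1 x.2.

Definition atom_or_bot (f : form) : Prop :=
  match f with Var _ | Bot => True | _ => False end.
Definition atom_bot_or_boxed (f : form) : Prop :=
  match f with Var _ | Bot | Box _ _ => True | _ => False end.

(* Derivability in G(KT^+_D) of the T-sequent  Sigma | Gamma => Delta.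
   Multisets are lists; the rule [d_perm] identifies lists up to permutation. *)
Inductive derivable : seq (grp * form) -> seq form -> seq form -> Prop :=
| d_perm S S' G G' D D' :
    Permutation S S' -> Permutation G G' -> Permutation D D' ->
    derivable S G D -> derivable S' G' D'
| d_id S G D p : derivable S (Var p :: G) (Var p :: D)
| d_bot S G D : derivable S (Bot :: G) D
| d_Rand S G D a1 a2 :
    derivable S G (a1 :: D) -> derivable S G (a2 :: D) ->
    derivable S G (And a1 a2 :: D)
| d_Land S G D a1 a2 :
    derivable S (a1 :: a2 :: G) D -> derivable S (And a1 a2 :: G) D
| d_Ror S G D a1 a2 :
    derivable S G (a1 :: a2 :: D) -> derivable S G (Or a1 a2 :: D)
| d_Lor S G D a1 a2 :
    derivable S (a1 :: G) D -> derivable S (a2 :: G) D ->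
    derivable S (Or a1 a2 :: G) D
| d_Rimp S G D a1 a2 :
    derivable S (a1 :: G) (a2 :: D) -> derivable S G (Imp a1 a2 :: D)
| d_Limp S G D a1 a2 :
    derivable S G (a1 :: D) -> derivable S (a2 :: G) D ->
    derivable S (Imp a1 a2 :: G) D
| d_Rneg S G D a :
    derivable S (a :: G) D -> derivable S G (Neg a :: D)
| d_Lneg S G D a :
    derivable S G (a :: D) -> derivable S (Neg a :: G) D
| d_DK S (L : seq (grp * form)) Pi Om (Gr : grp) b :
    derivable [::] (map snd L) [:: b] ->
    Forall (fun x : grp * form => sval x.1 \subset sval Gr) L ->
    Forall (fun x : grp * form => ~~ (sval x.1 \subset sval Gr)) S ->
    Forall atom_or_bot Pi ->
    Forall atom_bot_or_boxed Om ->
    derivable (S ++ L) Pi (Box Gr b :: Om)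
| d_DT S G D (Gr : grp) a :
    derivable ((Gr, a) :: S) (a :: G) D -> derivable S (Box Gr a :: G) D.

End Logic.

(* Pitts-style construction. If [s] is provable its interpolant is the verum. Otherwise it is
   the disjunction of: the atoms q <> p of the succedent and the negated atoms q <> p of the
   antecedent; for each backward application of a propositional rule or of (D_T^+), the
   conjunction of the interpolants of its premises; and, when [s] is saturated, one formula for
   each way a (D_K^+) step can combine boxed formulas of [s] with those of a p,a-free context:
   ~ D_H ~ I when the principal box lies in the context, and D_(G\a) I when it is D_G b in [s],
   where I interpolates the premise restricted to [s]. All these sequents are smaller than [s]
   for the lexicographic order on (modal depth, size), so the recursion is well founded.
   Property (iii) follows by induction on the derivation of the joint sequent, splitting on
   whether the principal formula comes from the context or from [s]. *)

From Stdlib Require Import List Permutation ClassicalEpsilon.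
From mathcomp Require Import all_boot zify.
Set Implicit Arguments.
Unset Strict Implicit.
Unset Printing Implicit Defensive.

Lemma Forall_or_split T (P Q : T -> Prop) l : (forall x, P x \/ Q x) ->
  Forall P l \/ exists l1 x l2, l = l1 ++ x :: l2 /\ Q x.
Proof.
move=> PQ; elim: l => [|y l [Pl|[l1 [x [l2 [-> Qx]]]]]]; first by left.
- by case: (PQ y) => [Py|Qy]; [left; constructor | right; exists [::], y, l].
- by right; exists (y :: l1), x, l2.
Qed.

Lemma filter_Forall T (P : pred T) l : Forall (fun x => P x) l -> filter P l = l.
Proof. by elim=> //= x {}l -> _ ->. Qed.

Lemma filter_Forall_not T (P : pred T) l : Forall (fun x => ~~ P x) l -> filter P l = [::].
Proof. by elim=> //= x {}l /negbTE -> _ ->. Qed.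

Lemma filter_hasN T (P : pred T) l : ~~ has P l -> filter P l = [::].
Proof. by elim: l => //= x l IH; case: (P x). Qed.

Lemma Forall_filter T (P : pred T) l : Forall (fun x => P x) (filter P l).
Proof. by apply/Forall_forall => x /filter_In []. Qed.

Lemma Permutation_filter T (P : pred T) l l' :
  Permutation l l' -> Permutation (filter P l) (filter P l').
Proof.
elim=> //= [x {}l {}l' _ IH|x y {}l|l1 l2 l3 _ IH1 _ IH2].
- by case: (P x); first exact: perm_skip.
- by case: (P x); case: (P y); [exact: perm_swap|..].
- exact: Permutation_trans IH1 IH2.
Qed.

Lemma Permutation_cons_cat_inv T (x : T) l l1 l2 : Permutation (x :: l) (l1 ++ l2) ->
  (exists l1' l1'', l1 = l1' ++ x :: l1'' /\ Permutation l ((l1' ++ l1'') ++ l2)) \/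
  (exists l2' l2'', l2 = l2' ++ x :: l2'' /\ Permutation l (l1 ++ (l2' ++ l2''))).
Proof.
move=> H; have /in_app_iff [] := Permutation_in x H (or_introl erefl).
all: move=> /(in_split _ _) [l' [l'' E]].
- left; exists l', l''; split => //; rewrite -catA; apply: (@Permutation_cons_app_inv _ _ _ _ x).
  by rewrite E -catA in H.
- right; exists l', l''; split => //; rewrite catA; apply: (@Permutation_cons_app_inv _ _ _ _ x).
  by rewrite E catA in H.
Qed.

Lemma In_pmap T U (f : T -> option U) y l : In y (pmap f l) <-> exists x, In x l /\ f x = Some y.
Proof.
elim: l => [|x l IH] /=; first by split => // -[? []].
case E: (f x) => [z|] /=; rewrite IH; split.
- by case=> [<-|[x' [H1 H2]]]; [exists x; split; first left | exists x'; split; first right].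
- by case=> x' [[<-|H1] H2]; [left; congruence | right; exists x'].
- by case=> x' [H1 H2]; exists x'; split; first right.
- by case=> x' [[<-|H1] H2]; [congruence | exists x'].
Qed.

Fixpoint splits T (l : seq T) : seq (seq T * T * seq T) :=
  if l is x :: l' then ([::], x, l') :: [seq (x :: t.1.1, t.1.2, t.2) | t <- splits l'] else [::].

Lemma splitsP T (l l1 l2 : seq T) x : In (l1, x, l2) (splits l) <-> l = l1 ++ x :: l2.
Proof.
elim: l l1 => [|y l IH] l1; first by case: l1.
case: l1 => [|z l1] /=; split.
- by case=> [[-> ->]|/in_map_iff [[[? ?] ?] [] //]].
- by case=> -> ->; left.
- by case=> [[]//|/in_map_iff [[[l1' x'] l2'] [[-> -> -> ->] /(IH _).1 ->]]].
- by case=> -> El; right; apply/in_map_iff; exists (l1, x, l2); split => //; apply/(IH _).2.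
Qed.

Lemma Forall_remove T (P : T -> Prop) l1 x l2 : Forall P (l1 ++ x :: l2) -> Forall P (l1 ++ l2).
Proof. by case/Forall_app => H1 H2; apply/Forall_app; split=> //; apply: Forall_inv_tail H2. Qed.

Lemma eq_In_filter T (P Q : pred T) l : (forall x, In x l -> P x = Q x) -> filter P l = filter Q l.
Proof. by elim: l => //= x l IH E; rewrite E ?IH //; [move=> y Hy; apply: E; right | left]. Qed.

Lemma has_In T (P : pred T) l : has P l <-> exists x, In x l /\ P x.
Proof.
elim: l => [|y l IH] /=; first by split=> // -[? []].
split=> [/orP [Py|/IH [x [Hx Px]]]|[x [[<-|Hx] Px]]]; first by exists y; split; first left.
- by exists x; split; first right.
- by rewrite Px.
- by apply/orP; right; apply/IH; exists x.
Qed.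

Lemma In_mem (T : eqType) (x : T) s : In x s <-> x \in s.
Proof.
elim: s => //= y s IH; rewrite in_cons.
split=> [[->|/IH ->]|/orP [/eqP ->|/IH]]; rewrite ?eqxx ?orbT; auto.
Qed.

Lemma count_occ_cons_add T (d : forall x y : T, {x = y} + {x <> y}) u l x :
  count_occ d (u :: l) x = (if d u x then 1 else 0) + count_occ d l x.
Proof. by rewrite /=; case: (d u x). Qed.

Section FormulaEqDec.
Variable Agt : finType.
Local Notation form := (form Agt).
Local Notation grp := (grp Agt).

Definition grp_eq_dec (G H : grp) : {G = H} + {G <> H}.
Proof. by case: (eqVneq G H) => h; [left | right; apply/eqP]. Defined.

Definition form_eq_dec (f g : form) : {f = g} + {f <> g}.
Proof. decide equality; [exact: PeanoNat.Nat.eq_dec | exact: grp_eq_dec]. Defined.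

Definition boxed_eq_dec (x y : grp * form) : {x = y} + {x <> y}.
Proof. decide equality; [exact: form_eq_dec | exact: grp_eq_dec]. Defined.
End FormulaEqDec.

(* Multiset equalities are decided by comparing multiplicities, which are linear in the
   multiplicities of the list variables and of the explicit elements. *)
Ltac perm_solve :=
  match goal with |- @Permutation ?T _ _ =>
    let d := match T with
             | (grp ?A * form ?A)%type => constr:(@boxed_eq_dec A)
             | form ?A => constr:(@form_eq_dec A) end in
    apply: (proj2 (Permutation_count_occ d _ _)); let x := fresh "x" in intro x;
    repeat match goal with H : @Permutation T _ _ |- _ =>
      move: (proj1 (Permutation_count_occ d _ _) H x); clear H end;
    repeat (rewrite count_occ_app || rewrite count_occ_cons_add); lia
  end.

Ltac perm_to S G D :=
  apply: (d_perm (S := S) (G := G) (D := D));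
  [first [exact: Permutation_refl | perm_solve] ..|].

Section Sequents.
Variable Agt : finType.
Local Notation form := (form Agt).
Local Notation grp := (grp Agt).
Local Notation derivable := (@derivable Agt).
Local Notation boxed := (@boxed Agt).

Record sequent := Sequent { boxes : seq (grp * form); ante : seq form; succ : seq form }.

Definition provable (s : sequent) : Prop := derivable (boxes s) (ante s) (succ s).

Definition sadd (s t : sequent) : sequent :=
  Sequent (boxes s ++ boxes t) (ante s ++ ante t) (succ s ++ succ t).

Definition formulas (s : sequent) : seq form := map boxed (boxes s) ++ ante s ++ succ s.

Definition within (H : {set Agt}) (t : grp * form) : bool := sval t.1 \subset H.

Definition saturated (s : sequent) : Prop :=
  Forall (@atom_or_bot Agt) (ante s) /\ Forall (@atom_bot_or_boxed Agt) (succ s).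

(* The propositional rules and (D_T^+) keep the context of their conclusion: a premise is the
   conclusion without its principal formula [x], extended by one of the listed sequents. *)
Definition left_premises (x : form) : option (seq sequent) :=
  match x with
  | And y z => Some [:: Sequent [::] [:: y; z] [::]]
  | Or y z => Some [:: Sequent [::] [:: y] [::]; Sequent [::] [:: z] [::]]
  | Imp y z => Some [:: Sequent [::] [::] [:: y]; Sequent [::] [:: z] [::]]
  | Neg y => Some [:: Sequent [::] [::] [:: y]]
  | Box G y => Some [:: Sequent [:: (G, y)] [:: y] [::]]
  | _ => None
  end.

Definition right_premises (x : form) : option (seq sequent) :=
  match x with
  | And y z => Some [:: Sequent [::] [::] [:: y]; Sequent [::] [::] [:: z]]
  | Or y z => Some [:: Sequent [::] [::] [:: y; z]]
  | Imp y z => Some [:: Sequent [::] [:: y] [:: z]]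
  | Neg y => Some [:: Sequent [::] [:: y] [::]]
  | _ => None
  end.

Lemma atom_or_left_premises x : atom_or_bot x \/ exists ps, left_premises x = Some ps.
Proof. by case: x => *; [left | left | right; eexists ..]. Qed.

Lemma atom_or_right_premises x : atom_bot_or_boxed x \/ exists ps, right_premises x = Some ps.
Proof. by case: x => *; [left | left | right; eexists .. | left]. Qed.

Lemma derivable_left S x G D ps : left_premises x = Some ps ->
  (forall i, In i ps -> provable (sadd i (Sequent S G D))) -> derivable S (x :: G) D.
Proof.
case: x => //= [y z|y z|y z|y|H y] [<-] prem;
  have P1 := prem _ (or_introl erefl); try have P2 := prem _ (or_intror (or_introl erefl)).
- exact: d_Land.
- exact: d_Lor.
- exact: d_Limp.
- exact: d_Lneg.
- exact: d_DT.
Qed.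

Lemma derivable_right S G x D ps : right_premises x = Some ps ->
  (forall i, In i ps -> provable (sadd i (Sequent S G D))) -> derivable S G (x :: D).
Proof.
case: x => //= [y z|y z|y z|y] [<-] prem;
  have P1 := prem _ (or_introl erefl); try have P2 := prem _ (or_intror (or_introl erefl)).
- exact: d_Rand.
- exact: d_Ror.
- exact: d_Rimp.
- exact: d_Rneg.
Qed.

Lemma derivable_premises_ind (P : sequent -> Prop) :
  (forall S S' G G' D D', Permutation S S' -> Permutation G G' -> Permutation D D' ->
     P (Sequent S G D) -> P (Sequent S' G' D')) ->
  (forall S G D q, P (Sequent S (Var _ q :: G) (Var _ q :: D))) ->
  (forall S G D, P (Sequent S (Bot Agt :: G) D)) ->
  (forall S x G D ps, left_premises x = Some ps ->
     (forall i, In i ps -> provable (sadd i (Sequent S G D)) /\ P (sadd i (Sequent S G D))) ->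
     P (Sequent S (x :: G) D)) ->
  (forall S G x D ps, right_premises x = Some ps ->
     (forall i, In i ps -> provable (sadd i (Sequent S G D)) /\ P (sadd i (Sequent S G D))) ->
     P (Sequent S G (x :: D))) ->
  (forall S L Pi Om (G : grp) b,
     derivable [::] (map snd L) [:: b] -> P (Sequent [::] (map snd L) [:: b]) ->
     Forall (fun t => within (sval G) t) L -> Forall (fun t => ~~ within (sval G) t) S ->
     Forall (@atom_or_bot Agt) Pi -> Forall (@atom_bot_or_boxed Agt) Om ->
     P (Sequent (S ++ L) Pi (Box G b :: Om))) ->
  forall S G D, derivable S G D -> P (Sequent S G D).
Proof.
move=> Hperm Hid Hbot Hleft Hright HDK S G D; elim=> {S G D}.
- by move=> S S' G G' D D' hS hG hD _; apply: Hperm.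
- exact: Hid.
- exact: Hbot.
- move=> S G D y z d1 IH1 d2 IH2.
  by apply: (Hright _ _ (And y z) _ _ erefl) => i /= [<-|[<-|[]]]; split.
- move=> S G D y z d IH; apply: (Hleft _ (And y z) _ _ _ erefl) => i /= [<-|[]]; by split.
- move=> S G D y z d IH; apply: (Hright _ _ (Or y z) _ _ erefl) => i /= [<-|[]]; by split.
- move=> S G D y z d1 IH1 d2 IH2.
  by apply: (Hleft _ (Or y z) _ _ _ erefl) => i /= [<-|[<-|[]]]; split.
- move=> S G D y z d IH; apply: (Hright _ _ (Imp y z) _ _ erefl) => i /= [<-|[]]; by split.
- move=> S G D y z d1 IH1 d2 IH2.
  by apply: (Hleft _ (Imp y z) _ _ _ erefl) => i /= [<-|[<-|[]]]; split.
- move=> S G D y d IH; apply: (Hright _ _ (Neg y) _ _ erefl) => i /= [<-|[]]; by split.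
- move=> S G D y d IH; apply: (Hleft _ (Neg y) _ _ _ erefl) => i /= [<-|[]]; by split.
- by move=> *; apply: HDK.
- move=> S G D H y d IH; apply: (Hleft _ (Box H y) _ _ _ erefl) => i /= [<-|[]]; by split.
Qed.

Lemma saddA s t u : sadd (sadd s t) u = sadd s (sadd t u).
Proof. by rewrite /sadd /= !catA. Qed.

Lemma provable_sadd_swap s t u : provable (sadd s (sadd t u)) -> provable (sadd t (sadd s u)).
Proof.
rewrite /provable /= => H.
by perm_to (boxes s ++ boxes t ++ boxes u) (ante s ++ ante t ++ ante u)
  (succ s ++ succ t ++ succ u).
Qed.

Fixpoint fsize (f : form) : nat :=
  match f with
  | Var _ | Bot => 1
  | And y z | Or y z | Imp y z => (fsize y + fsize z).+1
  | Neg y | Box _ y => (fsize y).+1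
  end.

Definition weight (s : sequent) : nat := sumn (map fsize (ante s ++ succ s)).

Lemma weight_sadd s t : weight (sadd s t) = weight s + weight t.
Proof. rewrite /weight /= !map_cat !sumn_cat; lia. Qed.

Lemma left_premises_weight x ps i : left_premises x = Some ps -> In i ps -> weight i < fsize x.
Proof.
case: x => //= [y z|y z|y z|y|G y] [<-] /= Hi; repeat case: Hi => [<-|Hi]; rewrite /weight /=; lia.
Qed.

Lemma right_premises_weight x ps i : right_premises x = Some ps -> In i ps -> weight i < fsize x.
Proof.
case: x => //= [y z|y z|y z|y] [<-] /= Hi; repeat case: Hi => [<-|Hi]; rewrite /weight /=; lia.
Qed.

(* Backwards application of the invertible rules reduces any extension of [c] to saturated ones. *)
Lemma provable_of_saturated c : (forall w, saturated w -> provable (sadd w c)) ->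
  forall w, provable (sadd w c).
Proof.
move=> sat w; have [n] := ubnP (weight w); elim: n w => // n IH w.
rewrite ltnS => Hw.
have [Ha|[A1 [x [A2 [Ea [ps Ex]]]]]] := Forall_or_split (ante w) (@atom_or_left_premises).
  have [Hd|[D1 [x [D2 [Ed [ps Ex]]]]]] := Forall_or_split (succ w) (@atom_or_right_premises).
    exact: sat.
  pose w' := Sequent (boxes w) (ante w) (D1 ++ D2).
  rewrite /provable /= Ed.
  perm_to (boxes w ++ boxes c) (ante w ++ ante c) (x :: (D1 ++ D2) ++ succ c).
  apply: (derivable_right Ex) => i Hi; rewrite -[Sequent _ _ _]/(sadd w' c) -saddA; apply: IH.
  have := right_premises_weight Ex Hi; move: Hw.
  rewrite weight_sadd /weight Ed /= !map_cat !sumn_cat /=; lia.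
pose w' := Sequent (boxes w) (A1 ++ A2) (succ w).
rewrite /provable /= Ea.
perm_to (boxes w ++ boxes c) (x :: (A1 ++ A2) ++ ante c) (succ w ++ succ c).
apply: (derivable_left Ex) => i Hi; rewrite -[Sequent _ _ _]/(sadd w' c) -saddA; apply: IH.
have := left_premises_weight Ex Hi; move: Hw.
rewrite weight_sadd /weight Ea /= !map_cat !sumn_cat /=; lia.
Qed.

Lemma Permutation_filterC (P : pred (grp * form)) l :
  Permutation l (filter (predC P) l ++ filter P l).
Proof. by elim: l => //= y l IH; case: (P y) => /=; perm_solve. Qed.

Lemma derivable_DK_within S Pi Om G b :
  derivable [::] (map snd (filter (within (sval G)) S)) [:: b] ->
  Forall (@atom_or_bot Agt) Pi -> Forall (@atom_bot_or_boxed Agt) Om ->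
  derivable S Pi (Box G b :: Om).
Proof.
move=> prem HPi HOm; have := Permutation_filterC (within (sval G)) S => HS.
perm_to (filter (predC (within (sval G))) S ++ filter (within (sval G)) S) Pi (Box G b :: Om).
apply: d_DK => //; first exact: Forall_filter.
exact: (Forall_filter (predC (within (sval G)))).
Qed.

Lemma weakening S G D : derivable S G D -> forall w, provable (sadd w (Sequent S G D)).
Proof.
move: S G D; apply: (derivable_premises_ind (P := fun s => forall w, provable (sadd w s))).
- move=> S S' G G' D D' hS hG hD IH w; apply: (d_perm _ _ _ (IH w));
    exact: Permutation_app_head.
- move=> S G D q w; rewrite /provable /=.
  perm_to (boxes w ++ S) (Var _ q :: ante w ++ G) (Var _ q :: succ w ++ D); exact: d_id.
- move=> S G D w; rewrite /provable /=.
  perm_to (boxes w ++ S) (Bot _ :: ante w ++ G) (succ w ++ D); exact: d_bot.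
- move=> S x G D ps Ex IH w; rewrite /provable /=.
  perm_to (boxes w ++ S) (x :: ante w ++ G) (succ w ++ D).
  by apply: (derivable_left Ex) => i /IH [_ /(_ w) /provable_sadd_swap].
- move=> S G x D ps Ex IH w; rewrite /provable /=.
  perm_to (boxes w ++ S) (ante w ++ G) (x :: succ w ++ D).
  by apply: (derivable_right Ex) => i /IH [_ /(_ w) /provable_sadd_swap].
- move=> S L Pi Om G b _ IH HL HS HPi HOm; apply: provable_of_saturated => w [Hwa Hwd].
  rewrite /provable /=; perm_to (boxes w ++ S ++ L) (ante w ++ Pi) (Box G b :: succ w ++ Om).
  apply: derivable_DK_within; last by apply/Forall_app.
    rewrite !filter_cat (filter_Forall_not HS) (filter_Forall HL) map_cat.
    exact: (IH (Sequent [::] (map snd (filter (within (sval G)) (boxes w))) [::])).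
  by apply/Forall_app.
Qed.

Lemma weakL S G D x : derivable S G D -> derivable S (x :: G) D.
Proof. by move/weakening/(_ (Sequent [::] [:: x] [::])). Qed.

Lemma weakR S G D x : derivable S G D -> derivable S G (x :: D).
Proof. by move/weakening/(_ (Sequent [::] [::] [:: x])). Qed.

Lemma weakL_in S G D u us : In u us -> derivable S (u :: G) D -> derivable S (us ++ G) D.
Proof.
move=> Hu; have [us1 [us2 ->]] := in_split _ _ Hu.
move=> /weakening /(_ (Sequent [::] (us1 ++ us2) [::])) /= H.
by perm_to S ((us1 ++ us2) ++ u :: G) D.
Qed.

Lemma derivable_boxes_to_ante Th S G D :
  derivable (Th ++ S) G D -> derivable S (map boxed Th ++ G) D.
Proof.
elim: Th S G => //= -[H y] Th IH S G d; apply: d_DT => /=.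
have {}d : derivable (Th ++ (H, y) :: S) (y :: G) D.
  by apply: weakL; perm_to ((H, y) :: Th ++ S) G D.
by perm_to ((H, y) :: S) (map boxed Th ++ y :: G) D; apply: IH.
Qed.

Definition sperm (s t : sequent) : Prop :=
  [/\ Permutation (boxes s) (boxes t), Permutation (ante s) (ante t)
    & Permutation (succ s) (succ t)].

Lemma provable_sperm s t : sperm s t -> provable s -> provable t.
Proof. by case=> hB hA hD; apply: d_perm. Qed.

Definition big_or (ds : seq form) : form := foldr (@Or Agt) (Bot Agt) ds.
Definition big_and (ds : seq form) : form := foldr (@And Agt) (Neg (Bot Agt)) ds.

Lemma big_orR ds d S G D : In d ds -> derivable S G (d :: D) -> derivable S G (big_or ds :: D).
Proof.
elim: ds => //= d' ds IH [->|/IH {}IH] H; apply: d_Ror.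
  by perm_to S G (big_or ds :: d :: D); apply: weakR.
by perm_to S G (d' :: big_or ds :: D); apply/weakR/IH.
Qed.

Lemma big_orL ds S G D :
  (forall d, In d ds -> derivable S (d :: G) D) -> derivable S (big_or ds :: G) D.
Proof.
elim: ds => [|d ds IH] /= H; first exact: d_bot.
by apply: d_Lor; [apply: H; left | apply: IH => d' Hd; apply: H; right].
Qed.

Lemma big_andR ds S G D :
  (forall d, In d ds -> derivable S G (d :: D)) -> derivable S G (big_and ds :: D).
Proof.
elim: ds => [|d ds IH] /= H; first exact/d_Rneg/d_bot.
by apply: d_Rand; [apply: H; left | apply: IH => d' Hd; apply: H; right].
Qed.

Lemma big_andL ds S G D : derivable S (ds ++ G) D -> derivable S (big_and ds :: G) D.
Proof.
elim: ds G => [|d ds IH] G /= H; first exact: weakL.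
by apply: d_Land; perm_to S (big_and ds :: d :: G) D; apply: IH; perm_to S (d :: ds ++ G) D.
Qed.
End Sequents.

Section Interpolation.
Variables (Agt : finType) (p : nat) (a : Agt).
Local Notation form := (form Agt).
Local Notation grp := (grp Agt).
Local Notation derivable := (@derivable Agt).
Local Notation boxed := (@boxed Agt).
Local Notation sequent := (sequent Agt).

Definition voc_sub (f g : form) : Prop :=
  (forall q, var_occ q f -> var_occ q g) /\ (forall b, agt_occ b f -> agt_occ b g).

Definition free (f : form) : Prop := ~ var_occ p f /\ ~ agt_occ a f.

Definition free_seq (s : sequent) : Prop := forall f, In f (formulas s) -> free f.

Definition voc_bounded (s : sequent) (A : form) : Prop :=
  (forall q, var_occ q A -> q <> p /\ exists f, In f (formulas s) /\ var_occ q f) /\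
  (forall b, agt_occ b A -> b <> a /\ exists f, In f (formulas s) /\ agt_occ b f).

Definition uniform_interpolant (s : sequent) (A : form) : Prop :=
  [/\ voc_bounded s A, derivable (boxes s) (A :: ante s) (succ s) &
      forall t, free_seq t -> provable (sadd t s) -> derivable (boxes t) (ante t) (A :: succ t)].

Lemma voc_sub_refl f : voc_sub f f.
Proof. by []. Qed.

Lemma voc_sub_body (t : grp * form) : voc_sub t.2 (boxed t).
Proof. by split=> * /=; [|right]. Qed.

Lemma free_voc_sub f g : voc_sub f g -> free g -> free f.
Proof. by case=> Hv Ha [Hp Hb]; split=> [/Hv|/Ha]. Qed.

Lemma in_formulas_sadd (s t : sequent) f :
  In f (formulas (sadd s t)) <-> In f (formulas s) \/ In f (formulas t).
Proof. by rewrite /formulas /= map_cat !in_app_iff; tauto. Qed.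

Lemma in_boxes_formulas (s : sequent) t : In t (boxes s) -> In (boxed t) (formulas s).
Proof. by move=> Ht; rewrite /formulas in_app_iff in_map_iff; left; exists t. Qed.

Lemma free_seq_sadd (s t : sequent) : free_seq s -> free_seq t -> free_seq (sadd s t).
Proof. by move=> Hs Ht f /in_formulas_sadd [/Hs|/Ht]. Qed.

Lemma free_seq_incl (s t : sequent) : free_seq t -> incl (formulas s) (formulas t) -> free_seq s.
Proof. by move=> Ht sub f /sub /Ht. Qed.

Lemma voc_bounded_sub (s s' : sequent) A : voc_bounded s' A ->
  (forall f, In f (formulas s') -> exists2 g, In g (formulas s) & voc_sub f g) -> voc_bounded s A.
Proof.
move=> [Hq Hb] cov.
by split=> [q /Hq|b /Hb] [ne [f [/cov [g Hg [Vq Vb]] Hf]]]; split=> //; exists g; auto.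
Qed.

Lemma voc_bounded_big_or (s : sequent) ds :
  (forall d, In d ds -> voc_bounded s d) -> voc_bounded s (big_or ds).
Proof.
elim: ds => [|d ds IH] H; first by split.
have [H1 H2] := H d (or_introl erefl); have [H3 H4] := IH (fun d' Hd => H d' (or_intror Hd)).
by split=> /= [q [/H1|/H3]|b [/H2|/H4]].
Qed.

Lemma voc_bounded_big_and (s : sequent) ds :
  (forall d, In d ds -> voc_bounded s d) -> voc_bounded s (big_and ds).
Proof.
elim: ds => [|d ds IH] H; first by split=> [q|b] //= [].
have [H1 H2] := H d (or_introl erefl); have [H3 H4] := IH (fun d' Hd => H d' (or_intror Hd)).
by split=> /= [q [/H1|/H3]|b [/H2|/H4]].
Qed.

Fixpoint mdepth (f : form) : nat :=
  match f with
  | Var _ | Bot => 0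
  | And y z | Or y z | Imp y z => maxn (mdepth y) (mdepth z)
  | Neg y => mdepth y
  | Box _ y => (mdepth y).+1
  end.

Lemma left_premises_sub (x : form) ps i f :
  left_premises x = Some ps -> In i ps -> In f (formulas i) ->
  voc_sub f x /\ mdepth f <= mdepth x.
Proof.
case: x => //= [y z|y z|y z|y|G y] [<-] /= Hi; repeat case: Hi => [<-|Hi];
  rewrite /formulas /= => Hf; repeat case: Hf => [<-|Hf];
  rewrite /voc_sub /=; split; try lia; by split=> *; tauto.
Qed.

Lemma right_premises_sub (x : form) ps i f :
  right_premises x = Some ps -> In i ps -> In f (formulas i) ->
  voc_sub f x /\ mdepth f <= mdepth x.
Proof.
case: x => //= [y z|y z|y z|y] [<-] /= Hi; repeat case: Hi => [<-|Hi];
  rewrite /formulas /= => Hf; repeat case: Hf => [<-|Hf];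
  rewrite /voc_sub /=; split; try lia; by split=> *; tauto.
Qed.

Definition depth (s : sequent) : nat := foldr maxn 0 (map mdepth (formulas s)).

Lemma depth_leP (s : sequent) k : depth s <= k <-> forall f, In f (formulas s) -> mdepth f <= k.
Proof.
rewrite /depth; elim: (formulas s) => [|g l IH] /=; first by split.
rewrite geq_max; split=> [/andP [Hg /IH Hl] f [<-|/Hl] //|H].
by rewrite H /=; [apply/IH => f Hf; apply: H; right | left].
Qed.

Lemma mdepth_le_depth (s : sequent) f : In f (formulas s) -> mdepth f <= depth s.
Proof. by move: f; apply/depth_leP. Qed.

Definition smaller (s' s : sequent) : Prop :=
  depth s' < depth s \/ depth s' <= depth s /\ weight s' < weight s.

Lemma smaller_ind (P : sequent -> Prop) :
  (forall s, (forall s', smaller s' s -> P s') -> P s) -> forall s, P s.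
Proof.
move=> step s; have [d] := ubnP (depth s); have [n] := ubnP (weight s).
elim: d n s => // d IHd n; elim: n => // n IHn s Hn Hd; apply: step => s' [lt_d|[le_d lt_n]].
  by apply: (IHd (weight s').+1) => //; lia.
by apply: IHn => //; lia.
Qed.

Lemma smaller_deeper (s' s : sequent) :
  (forall f, In f (formulas s') -> mdepth f < depth s) -> 0 < depth s -> smaller s' s.
Proof.
move=> lt pos; left; have: depth s' <= (depth s).-1; last by lia.
by apply/depth_leP => f /lt; lia.
Qed.

Lemma mdepth_body_lt_depth (s : sequent) t : In t (boxes s) -> mdepth t.2 < depth s.
Proof.
by move=> Ht; apply: (mdepth_le_depth (f := boxed t)); apply: in_boxes_formulas.
Qed.

Lemma ante_split_formulas (s : sequent) G1 x G2 : ante s = G1 ++ x :: G2 ->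
  In x (formulas s) /\ incl (formulas (Sequent (boxes s) (G1 ++ G2) (succ s))) (formulas s).
Proof. by rewrite /formulas => -> /=; split=> [|f]; rewrite !in_app_iff /=; tauto. Qed.

Lemma succ_split_formulas (s : sequent) D1 x D2 : succ s = D1 ++ x :: D2 ->
  In x (formulas s) /\ incl (formulas (Sequent (boxes s) (ante s) (D1 ++ D2))) (formulas s).
Proof. by rewrite /formulas => -> /=; split=> [|f]; rewrite !in_app_iff /=; tauto. Qed.

Lemma smaller_premise (s c i : sequent) x : In x (formulas s) ->
  (forall f, In f (formulas i) -> mdepth f <= mdepth x) -> weight i < fsize x ->
  incl (formulas c) (formulas s) -> weight c + fsize x = weight s ->
  smaller (sadd i c) s.
Proof.
move=> Hx Hi wi Hc wc; right; rewrite weight_sadd; split; last by lia.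
apply/depth_leP => f /in_formulas_sadd [/Hi le|/Hc]; last exact: mdepth_le_depth.
exact: leq_trans le (mdepth_le_depth Hx).
Qed.

Lemma smaller_left (s : sequent) G1 x G2 ps i :
  ante s = G1 ++ x :: G2 -> left_premises x = Some ps -> In i ps ->
  smaller (sadd i (Sequent (boxes s) (G1 ++ G2) (succ s))) s.
Proof.
move=> Es Ex Hi; have [Hx Hc] := ante_split_formulas Es.
apply: smaller_premise Hx _ (left_premises_weight Ex Hi) Hc _.
  by move=> f /(left_premises_sub Ex Hi) [].
by rewrite /weight Es /= !map_cat !sumn_cat /=; lia.
Qed.

Lemma smaller_right (s : sequent) D1 x D2 ps i :
  succ s = D1 ++ x :: D2 -> right_premises x = Some ps -> In i ps ->
  smaller (sadd i (Sequent (boxes s) (ante s) (D1 ++ D2))) s.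
Proof.
move=> Es Ex Hi; have [Hx Hc] := succ_split_formulas Es.
apply: smaller_premise Hx _ (right_premises_weight Ex Hi) Hc _.
  by move=> f /(right_premises_sub Ex Hi) [].
by rewrite /weight Es /= !map_cat !sumn_cat /=; lia.
Qed.

(* A junk value unless [s] has a uniform interpolant, which [ui_spec] shows always holds. *)
Definition ui (s : sequent) : form := epsilon (inhabits (Bot Agt)) (uniform_interpolant s).

Definition bodies_within (H : {set Agt}) (S : seq (grp * form)) : seq form :=
  map snd (filter (within H) S).

Definition nonp_var (f : form) : option form :=
  if f is Var q then (if q == p then None else Some f) else None.

Definition conj_ui (c : sequent) (ps : seq sequent) : form := big_and [seq ui (sadd i c) | i <- ps].

Definition group_agents (S : seq (grp * form)) : {set Agt} :=
  [set b | has (fun t : grp * form => b \in sval t.1) S].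

Definition atom_disjuncts (s : sequent) : seq form :=
  pmap nonp_var (succ s) ++ [seq Neg f | f <- pmap nonp_var (ante s)].

Definition left_disjuncts (s : sequent) : seq form :=
  pmap (fun '(G1, x, G2) =>
          omap (conj_ui (Sequent (boxes s) (G1 ++ G2) (succ s))) (left_premises x))
    (splits (ante s)).

Definition right_disjuncts (s : sequent) : seq form :=
  pmap (fun '(D1, x, D2) =>
          omap (conj_ui (Sequent (boxes s) (ante s) (D1 ++ D2))) (right_premises x))
    (splits (succ s)).

(* [H] ranges over the unions of groups of boxed formulas of [s] that a (D_K^+) step whose
   principal formula lies in the context may use. *)
Definition diamond_disjuncts (s : sequent) : seq form :=
  pmap (fun H : {set Agt} =>
          omap (fun G : grp =>
                  Neg (Box G (Neg (ui (Sequent [::] (bodies_within H (boxes s)) [::])))))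
               (insub H))
    (enum [pred H : {set Agt} |
           [&& a \notin H, has (within H) (boxes s) & H \subset group_agents (boxes s)]]).

(* The boxed formulas of a context free of [a] that fit in [G] already fit in [G :\ a]. *)
Definition box_disjunct (s : sequent) (f : form) : option form :=
  if f is Box G b then
    omap (fun G' : grp => Box G' (ui (Sequent [::] (bodies_within (sval G) (boxes s)) [:: b])))
         (insub (sval G :\ a))
  else None.

Definition disjuncts (s : sequent) : seq form :=
  atom_disjuncts s ++ left_disjuncts s ++ right_disjuncts s ++
  if excluded_middle_informative (saturated s)
  then diamond_disjuncts s ++ pmap (box_disjunct s) (succ s) else [::].

Definition interpolant (s : sequent) : form :=
  if excluded_middle_informative (provable s) then Neg (Bot Agt) else big_or (disjuncts s).

Lemma top_interpolant (s : sequent) : provable s -> uniform_interpolant s (Neg (Bot Agt)).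
Proof. by move=> ds; split; [split | apply/d_Lneg/weakR | move=> t _ _; apply/d_Rneg/d_bot]. Qed.

Lemma voc_bounded_premise (s c i : sequent) x A :
  voc_bounded (sadd i c) A -> In x (formulas s) -> (forall f, In f (formulas i) -> voc_sub f x) ->
  incl (formulas c) (formulas s) -> voc_bounded s A.
Proof.
move=> V Hx Hi Hc; apply: voc_bounded_sub V _ => f /in_formulas_sadd [/Hi|/Hc]; first by exists x.
by exists f => //; apply: voc_sub_refl.
Qed.

Lemma free_seq_premise (t c i : sequent) x :
  free_seq t -> In x (formulas t) -> (forall f, In f (formulas i) -> voc_sub f x) ->
  incl (formulas c) (formulas t) -> free_seq (sadd i c).
Proof.
move=> Ht Hx Hi Hc; apply: free_seq_sadd; last exact: free_seq_incl Ht Hc.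
by move=> f /Hi /free_voc_sub; apply; apply: Ht.
Qed.

Lemma in_bodies_within H (S : seq (grp * form)) f :
  In f (bodies_within H S) -> exists2 t, In t S & f = t.2.
Proof. by case/in_map_iff => t [<- /filter_In []]; exists t. Qed.

Lemma in_group_agents b (S : seq (grp * form)) :
  b \in group_agents S -> exists2 t, In t S & b \in sval t.1.
Proof. by rewrite inE => /has_In [t []]; exists t. Qed.

Lemma group_agents_subset (S : seq (grp * form)) (X : {set Agt}) :
  (forall t, In t S -> sval t.1 \subset X) -> group_agents S \subset X.
Proof. by move=> sub; apply/subsetP => b /in_group_agents [t /sub /subsetP]; apply. Qed.

Lemma sub_group_agents t (S : seq (grp * form)) : In t S -> sval t.1 \subset group_agents S.
Proof. by move=> Ht; apply/subsetP => b Hb; rewrite inE; apply/has_In; exists t. Qed.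

Section Construction.
Variable s : sequent.
Hypothesis IH : forall s', smaller s' s -> uniform_interpolant s' (ui s').

Let sound (d : form) := voc_bounded s d /\ derivable (boxes s) (d :: ante s) (succ s).

Lemma voc_bounded_bodies H bs A :
  voc_bounded (Sequent [::] (bodies_within H (boxes s)) bs) A ->
  (forall b, In b bs -> exists G, In (Box G b) (succ s)) -> voc_bounded s A.
Proof.
move=> V Hbs; apply: voc_bounded_sub V _ => f; rewrite /formulas /= in_app_iff => -[|Hf].
  case/in_bodies_within => t /in_boxes_formulas Ht ->.
  by exists (boxed t) => //; apply: voc_sub_body.
have [G HG] := Hbs f Hf; exists (Box G f); first by rewrite /formulas !in_app_iff; tauto.
exact: voc_sub_body (G, f).
Qed.

Lemma box_succ_depth_gt0 G b : In (Box G b) (succ s) -> 0 < depth s.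
Proof.
move=> Hb; apply: (leq_trans _ (mdepth_le_depth (f := Box G b) _)) => //.
by rewrite /formulas !in_app_iff; tauto.
Qed.

Lemma smaller_bodies H bs : 0 < depth s ->
  (forall b, In b bs -> exists G, In (Box G b) (succ s)) ->
  smaller (Sequent [::] (bodies_within H (boxes s)) bs) s.
Proof.
move=> pos Hbs; apply: smaller_deeper => //.
move=> f; rewrite /formulas /= in_app_iff.
case=> [/in_bodies_within [t /mdepth_body_lt_depth lt ->] //|Hf].
have [G HG] := Hbs f Hf; apply: leq_trans (mdepth_le_depth (f := Box G f) _) => //.
by rewrite /formulas !in_app_iff; tauto.
Qed.

Lemma atom_disjuncts_sound d : In d (atom_disjuncts s) -> sound d.
Proof.
have voc q : q <> p -> In (Var _ q) (formulas s) -> voc_bounded s (Var _ q).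
  by move=> ne Hq; split=> //= r ->; split=> //; exists (Var _ q).
have nonpP f l : In f (pmap nonp_var l) -> exists2 q, q <> p /\ In (Var _ q) l & f = Var _ q.
  case/In_pmap => -[q| |? ?|? ?|? ?|?|? ?] [Hq E] //; move: E => /=.
  by case: eqP => // ne [<-]; exists q => //; split.
rewrite /atom_disjuncts in_app_iff.
case=> [/nonpP [q [ne Hq] ->]|/in_map_iff [f [<- /nonpP [q [ne Hq] ->]]]].
  split; first by apply: voc => //; rewrite /formulas !in_app_iff; tauto.
  have [D1 [D2 ->]] := in_split _ _ Hq.
  by perm_to (boxes s) (Var _ q :: ante s) (Var _ q :: D1 ++ D2); apply: d_id.
split; first by have [] := voc q ne; first by rewrite /formulas !in_app_iff; tauto.
have [G1 [G2 ->]] := in_split _ _ Hq; apply: d_Lneg.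
by perm_to (boxes s) (Var _ q :: G1 ++ G2) (Var _ q :: succ s); apply: d_id.
Qed.

Lemma left_disjuncts_sound d : In d (left_disjuncts s) -> sound d.
Proof.
case/In_pmap => -[[G1 x] G2] [/splitsP Es]; case Ex: (left_premises x) => [ps|] //= [<-].
have [Hx Hc] := ante_split_formulas Es; set c := Sequent _ _ _.
have U i : In i ps -> uniform_interpolant (sadd i c) (ui (sadd i c)).
  by move=> Hi; apply/IH/(smaller_left Es Ex Hi).
split.
  apply: voc_bounded_big_and => _ /in_map_iff [i [<- Hi]]; have [V _ _] := U i Hi.
  by apply: voc_bounded_premise V Hx _ Hc => f /(left_premises_sub Ex Hi) [].
apply: big_andL; rewrite Es.
perm_to (boxes s) (x :: [seq ui (sadd i c) | i <- ps] ++ G1 ++ G2) (succ s).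
apply: (derivable_left Ex) => i Hi.
have [_ /(weakL_in (in_map (fun j => ui (sadd j c)) _ _ Hi)) D _] := U i Hi.
rewrite /provable /=.
by perm_to (boxes i ++ boxes s) ([seq ui (sadd i c) | i <- ps] ++ ante i ++ G1 ++ G2)
  (succ i ++ succ s).
Qed.

Lemma right_disjuncts_sound d : In d (right_disjuncts s) -> sound d.
Proof.
case/In_pmap => -[[D1 x] D2] [/splitsP Es]; case Ex: (right_premises x) => [ps|] //= [<-].
have [Hx Hc] := succ_split_formulas Es; set c := Sequent _ _ _.
have U i : In i ps -> uniform_interpolant (sadd i c) (ui (sadd i c)).
  by move=> Hi; apply/IH/(smaller_right Es Ex Hi).
split.
  apply: voc_bounded_big_and => _ /in_map_iff [i [<- Hi]]; have [V _ _] := U i Hi.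
  by apply: voc_bounded_premise V Hx _ Hc => f /(right_premises_sub Ex Hi) [].
apply: big_andL; rewrite Es.
perm_to (boxes s) ([seq ui (sadd i c) | i <- ps] ++ ante s) (x :: D1 ++ D2).
apply: (derivable_right Ex) => i Hi.
have [_ /(weakL_in (in_map (fun j => ui (sadd j c)) _ _ Hi)) D _] := U i Hi.
rewrite /provable /=.
by perm_to (boxes i ++ boxes s) ([seq ui (sadd i c) | i <- ps] ++ ante i ++ ante s)
  (succ i ++ D1 ++ D2).
Qed.

Lemma diamond_disjuncts_sound d : saturated s -> In d (diamond_disjuncts s) -> sound d.
Proof.
move=> [Sa Sd] /In_pmap [H [/In_mem]]; rewrite mem_enum inE => /and3P [aH hasH subH].
case: insubP => // G0 _ EG0 [<-]; set S1 := Sequent _ _ _.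
have [t0 [Ht0 _]] := (has_In _ _).1 hasH.
have [V1 D1 _] : uniform_interpolant S1 (ui S1).
  by apply/IH/smaller_bodies => //; apply: leq_ltn_trans (mdepth_body_lt_depth Ht0).
have [Vq Vb] : voc_bounded s (ui S1) by apply: voc_bounded_bodies V1 _.
split.
  split=> [q /Vq|b /= [|/Vb]] //; rewrite EG0 => Hb; split; first by move=> E; rewrite -E Hb in aH.
  have [t Ht Hbt] := in_group_agents (subsetP subH b Hb).
  by exists (boxed t); split; [apply: in_boxes_formulas | left].
by apply/d_Lneg/derivable_DK_within => //; rewrite EG0; apply: d_Rneg.
Qed.

Lemma box_disjuncts_sound d : saturated s -> In d (pmap (box_disjunct s) (succ s)) -> sound d.
Proof.
move=> [Sa Sd] /In_pmap [[? | |? ?|? ?|? ?|?|G b] [Hb E]] //; move: E => /=.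
case: insubP => // G' _ EG' [<-]; set S2 := Sequent _ _ _.
have HbS b' : In b' [:: b] -> exists G, In (Box G b') (succ s) by case=> [<-|[]]; exists G.
have [V2 D2 _] : uniform_interpolant S2 (ui S2).
  by apply/IH/smaller_bodies => //; apply: box_succ_depth_gt0 Hb.
have [Vq Vb] : voc_bounded s (ui S2) by apply: voc_bounded_bodies V2 _.
split.
  split=> [q /Vq|b' /= [|/Vb]] //; rewrite EG' in_setD1 => /andP [/eqP ne Hb']; split=> //.
  by exists (Box G b); split; [rewrite /formulas !in_app_iff; tauto | left].
apply/d_DT/weakL; have [L1 [L2 Es]] := in_split _ _ Hb; rewrite Es in Sd *.
perm_to ((G', ui S2) :: boxes s) (ante s) (Box G b :: L1 ++ L2).
apply: derivable_DK_within => //; last exact: Forall_remove Sd.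
by rewrite /= {1}/within /= EG' subD1set.
Qed.

Lemma diamond_disjunct_in (G : grp) : a \notin sval G -> has (within (sval G)) (boxes s) ->
  exists2 G0 : grp,
    sval G0 \subset sval G /\ bodies_within (sval G0) (boxes s) = bodies_within (sval G) (boxes s) &
    In (Neg (Box G0 (Neg (ui (Sequent [::] (bodies_within (sval G0) (boxes s)) [::])))))
       (diamond_disjuncts s).
Proof.
move=> aG hasG; set H := group_agents (filter (within (sval G)) (boxes s)).
have HG : H \subset sval G by apply: group_agents_subset => t /filter_In [].
have [t0 [Ht0 t0G]] := (has_In _ _).1 hasG.
have t0H : sval t0.1 \subset H by apply/sub_group_agents/filter_In.
have H0 : H != set0.
  by have /set0Pn [b Hb] := svalP t0.1; apply/set0Pn; exists b; apply: (subsetP t0H).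
exists (exist _ H H0); first split => //.
  congr map; apply: eq_In_filter => t Ht; apply/idP/idP => [/subset_trans|]; first exact.
  by move=> tG; apply/sub_group_agents/filter_In.
apply/In_pmap; exists H; rewrite insubT; split => //; apply/In_mem; rewrite mem_enum inE.
apply/and3P; split; first by apply: contra aG; apply: (subsetP HG).
  by apply/has_In; exists t0.
by apply: group_agents_subset => t /filter_In [Ht _]; apply: sub_group_agents.
Qed.

Lemma box_disjunct_in (G : grp) b : In (Box G b) (succ s) -> sval G :\ a != set0 ->
  exists2 G' : grp, sval G' = sval G :\ a &
    In (Box G' (ui (Sequent [::] (bodies_within (sval G) (boxes s)) [:: b])))
       (pmap (box_disjunct s) (succ s)).
Proof.
move=> Hb ne; exists (exist (fun H => H != set0) _ ne) => //.
by apply/In_pmap; exists (Box G b); rewrite /= insubT.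
Qed.

Lemma disjuncts_sound d : In d (disjuncts s) -> sound d.
Proof.
rewrite /disjuncts => /in_app_iff [|/in_app_iff [|/in_app_iff [|]]];
  [exact: atom_disjuncts_sound | exact: left_disjuncts_sound | exact: right_disjuncts_sound|].
case: excluded_middle_informative => // sat.
by rewrite in_app_iff => -[]; [exact: diamond_disjuncts_sound | exact: box_disjuncts_sound].
Qed.

Section Completeness.
Hypothesis not_provable : ~ provable s.

Let A := big_or (disjuncts s).

Let interpolated (X : sequent) := forall t, free_seq t -> sperm X (sadd t s) ->
  derivable (boxes t) (ante t) (A :: succ t).

Lemma modal_disjuncts_in d : saturated s ->
  In d (diamond_disjuncts s ++ pmap (box_disjunct s) (succ s)) -> In d (disjuncts s).
Proof.
move=> sat Hd; rewrite /disjuncts; case: excluded_middle_informative => // sat' /=.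
by rewrite !in_app_iff in Hd *; tauto.
Qed.

Lemma var_disjunct_in q : In (Var _ q) (succ s) -> q <> p -> In (Var _ q) (disjuncts s).
Proof.
move=> Hq ne; rewrite /disjuncts /atom_disjuncts !in_app_iff; do 2 left.
by apply/In_pmap; exists (Var _ q); split=> //=; case: eqP.
Qed.

Lemma neg_var_disjunct_in q : In (Var _ q) (ante s) -> q <> p -> In (Neg (Var _ q)) (disjuncts s).
Proof.
move=> Hq ne; rewrite /disjuncts /atom_disjuncts !in_app_iff; left; right.
apply/in_map_iff; exists (Var _ q); split=> //.
by apply/In_pmap; exists (Var _ q); split=> //=; case: eqP.
Qed.

Lemma left_disjunct_in G1 x G2 ps : ante s = G1 ++ x :: G2 -> left_premises x = Some ps ->
  In (conj_ui (Sequent (boxes s) (G1 ++ G2) (succ s)) ps) (disjuncts s).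
Proof.
move=> Es Ex; rewrite /disjuncts !in_app_iff; right; left.
by apply/In_pmap; exists (G1, x, G2); split; [apply/splitsP | rewrite /= Ex].
Qed.

Lemma right_disjunct_in D1 x D2 ps : succ s = D1 ++ x :: D2 -> right_premises x = Some ps ->
  In (conj_ui (Sequent (boxes s) (ante s) (D1 ++ D2)) ps) (disjuncts s).
Proof.
move=> Es Ex; rewrite /disjuncts !in_app_iff; do 2 right; left.
by apply/In_pmap; exists (D1, x, D2); split; [apply/splitsP | rewrite /= Ex].
Qed.

Lemma free_var_neq t q : free_seq t -> In (Var _ q) (formulas t) -> q <> p.
Proof. by move=> Ht /Ht [nq _] E; apply: nq; rewrite E. Qed.

Lemma interpolated_id S G D q : interpolated (Sequent S (Var _ q :: G) (Var _ q :: D)).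
Proof.
move=> t Ht [/= _ hA hD].
have inA P1 P2 : ante t = P1 ++ Var _ q :: P2 -> In (Var _ q) (formulas t).
  by move=> E; rewrite /formulas E !in_app_iff /=; tauto.
have inD L1 L2 : succ t = L1 ++ Var _ q :: L2 -> In (Var _ q) (formulas t).
  by move=> E; rewrite /formulas E !in_app_iff /=; tauto.
case: (Permutation_cons_cat_inv hA) => [[P1 [P2 [Et _]]]|[G1 [G2 [Es _]]]];
case: (Permutation_cons_cat_inv hD) => [[L1 [L2 [Et' _]]]|[D1 [D2 [Es' _]]]].
- rewrite Et Et'; perm_to (boxes t) (Var _ q :: P1 ++ P2) (Var _ q :: A :: L1 ++ L2); exact: d_id.
- apply: (big_orR (var_disjunct_in _ (free_var_neq Ht (inA _ _ Et)))).
    by rewrite Es' in_app_iff /=; tauto.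
  rewrite Et; perm_to (boxes t) (Var _ q :: P1 ++ P2) (Var _ q :: succ t); exact: d_id.
- apply: (big_orR (neg_var_disjunct_in _ (free_var_neq Ht (inD _ _ Et')))).
    by rewrite Es in_app_iff /=; tauto.
  apply: d_Rneg; rewrite Et'.
  perm_to (boxes t) (Var _ q :: ante t) (Var _ q :: L1 ++ L2); exact: d_id.
- case: not_provable; rewrite /provable Es Es'.
  perm_to (boxes s) (Var _ q :: G1 ++ G2) (Var _ q :: D1 ++ D2); exact: d_id.
Qed.

Lemma interpolated_bot S G D : interpolated (Sequent S (Bot _ :: G) D).
Proof.
move=> t Ht [/= _ hA _].
case: (Permutation_cons_cat_inv hA) => [[P1 [P2 [Et _]]]|[G1 [G2 [Es _]]]].
  by rewrite Et; perm_to (boxes t) (Bot _ :: P1 ++ P2) (A :: succ t); apply: d_bot.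
case: not_provable; rewrite /provable Es.
by perm_to (boxes s) (Bot _ :: G1 ++ G2) (succ s); apply: d_bot.
Qed.

Lemma interpolated_left S x G D ps : left_premises x = Some ps ->
  (forall i, In i ps ->
     provable (sadd i (Sequent S G D)) /\ interpolated (sadd i (Sequent S G D))) ->
  interpolated (Sequent S (x :: G) D).
Proof.
move=> Ex prem t Ht [/= hB hA hD].
case: (Permutation_cons_cat_inv hA) => [[P1 [P2 [Et hA']]]|[G1 [G2 [Es hA']]]].
  have [Hx Hc] := ante_split_formulas Et; set c := Sequent _ _ _ in Hc.
  rewrite Et; perm_to (boxes t) (x :: P1 ++ P2) (A :: succ t); apply: (derivable_left Ex) => i Hi.
  have Hic : free_seq (sadd i c).
    by apply: free_seq_premise Ht Hx _ Hc => f /(left_premises_sub Ex Hi) [].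
  have := (prem i Hi).2 _ Hic; rewrite /provable /= => H.
  perm_to (boxes i ++ boxes t) (ante i ++ P1 ++ P2) (A :: succ i ++ succ t).
  by apply: H; split=> /=; perm_solve.
apply: big_orR (left_disjunct_in Es Ex) _; apply: big_andR => _ /in_map_iff [i [<- Hi]].
have [_ _ U] := IH (smaller_left Es Ex Hi); apply: U => //.
by apply: provable_sperm (prem i Hi).1; split=> /=; perm_solve.
Qed.

Lemma interpolated_right S G x D ps : right_premises x = Some ps ->
  (forall i, In i ps ->
     provable (sadd i (Sequent S G D)) /\ interpolated (sadd i (Sequent S G D))) ->
  interpolated (Sequent S G (x :: D)).
Proof.
move=> Ex prem t Ht [/= hB hA hD].
case: (Permutation_cons_cat_inv hD) => [[L1 [L2 [Et hD']]]|[D1 [D2 [Es hD']]]].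
  have [Hx Hc] := succ_split_formulas Et; set c := Sequent _ _ _ in Hc.
  rewrite Et; perm_to (boxes t) (ante t) (x :: A :: L1 ++ L2); apply: (derivable_right Ex) => i Hi.
  have Hic : free_seq (sadd i c).
    by apply: free_seq_premise Ht Hx _ Hc => f /(right_premises_sub Ex Hi) [].
  have := (prem i Hi).2 _ Hic; rewrite /provable /= => H.
  perm_to (boxes i ++ boxes t) (ante i ++ ante t) (A :: succ i ++ L1 ++ L2).
  by apply: H; split=> /=; perm_solve.
apply: big_orR (right_disjunct_in Es Ex) _; apply: big_andR => _ /in_map_iff [i [<- Hi]].
have [_ _ U] := IH (smaller_right Es Ex Hi); apply: U => //.
by apply: provable_sperm (prem i Hi).1; split=> /=; perm_solve.
Qed.

Lemma diamond_disjunct_complete G b t : saturated s -> has (within (sval G)) (boxes s) ->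
  free_seq t -> free (Box G b) ->
  Forall (@atom_or_bot Agt) (ante t) -> Forall (@atom_bot_or_boxed Agt) (succ t) ->
  derivable [::] (bodies_within (sval G) (boxes t) ++ bodies_within (sval G) (boxes s)) [:: b] ->
  derivable (boxes t) (ante t) (A :: Box G b :: succ t).
Proof.
move=> sat hasG Ht [bp ba] Hta Htd prem.
have aG : a \notin sval G by apply/negP => aG; apply: ba; left.
have [G0 [G0G EG0] Hin] := diamond_disjunct_in aG hasG.
set S1 := Sequent [::] (bodies_within (sval G0) (boxes s)) [::].
have [_ _ U1] : uniform_interpolant S1 (ui S1).
  have [t0 [Ht0 _]] := (has_In _ _).1 hasG.
  by apply/IH/smaller_bodies => //; apply: leq_ltn_trans (mdepth_body_lt_depth Ht0).
have HB : derivable [::] (bodies_within (sval G) (boxes t)) [:: ui S1; b].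
  apply: (U1 (Sequent [::] (bodies_within (sval G) (boxes t)) [:: b])).
    2: by rewrite /provable /= EG0.
  move=> f; rewrite /formulas /= in_app_iff => -[/in_bodies_within [u Hu ->]|[<-|[]]].
    exact: free_voc_sub (voc_sub_body u) (Ht _ (in_boxes_formulas Hu)).
  exact: free_voc_sub (voc_sub_body (G, b)) (conj bp ba).
apply: (big_orR (modal_disjuncts_in sat _)); first by apply/in_app_iff; left; exact: Hin.
apply/d_Rneg/d_DT/weakL/derivable_DK_within => //.
by rewrite /= {1}/within G0G; apply/d_Lneg.
Qed.

Lemma box_disjunct_complete G b t : saturated s -> In (Box G b) (succ s) ->
  free_seq t -> has (within (sval G)) (boxes t) ->
  Forall (@atom_or_bot Agt) (ante t) -> Forall (@atom_bot_or_boxed Agt) (succ t) ->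
  derivable [::] (bodies_within (sval G) (boxes t) ++ bodies_within (sval G) (boxes s)) [:: b] ->
  derivable (boxes t) (ante t) (A :: succ t).
Proof.
move=> sat Hb Ht hasG Hta Htd prem.
have aT u : In u (boxes t) -> a \notin sval u.1.
  by move=> Hu; apply/negP => au; apply: (Ht _ (in_boxes_formulas Hu)).2; left.
have [u [Hu uG]] := (has_In _ _).1 hasG.
have ne : sval G :\ a != set0.
  have /set0Pn [c Hc] := svalP u.1; apply/set0Pn; exists c.
  rewrite in_setD1 (subsetP uG c Hc) andbT.
  by apply: contraNneq (aT u Hu) => <-.
have [G' EG' Hin] := box_disjunct_in Hb ne.
set S2 := Sequent [::] (bodies_within (sval G) (boxes s)) [:: b].
have [_ _ U2] : uniform_interpolant S2 (ui S2).
  by apply/IH/smaller_bodies; [exact: box_succ_depth_gt0 Hb | move=> b' [<-|[]]; exists G].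
have HC : derivable [::] (bodies_within (sval G) (boxes t)) [:: ui S2].
  apply: (U2 (Sequent [::] (bodies_within (sval G) (boxes t)) [::])) => // f.
  rewrite /formulas /= cats0 => /in_bodies_within [v Hv ->].
  exact: free_voc_sub (voc_sub_body v) (Ht _ (in_boxes_formulas Hv)).
apply: (big_orR (modal_disjuncts_in sat _)); first by apply/in_app_iff; right; exact: Hin.
apply: derivable_DK_within => //.
have -> : filter (within (sval G')) (boxes t) = filter (within (sval G)) (boxes t).
  by apply: eq_In_filter => v Hv; rewrite /within EG' subsetD1 (aT v Hv) andbT.
exact: HC.
Qed.

Lemma interpolated_DK S L Pi Om G b : derivable [::] (map snd L) [:: b] ->
  Forall (fun t => within (sval G) t) L -> Forall (fun t => ~~ within (sval G) t) S ->
  Forall (@atom_or_bot Agt) Pi -> Forall (@atom_bot_or_boxed Agt) Om ->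
  interpolated (Sequent (S ++ L) Pi (Box G b :: Om)).
Proof.
move=> prem HL HS HPi HOm t Ht [/= hB hA hD].
have {}prem :
    derivable [::] (bodies_within (sval G) (boxes t) ++ bodies_within (sval G) (boxes s)) [:: b].
  apply: d_perm (Permutation_refl _) _ (Permutation_refl _) prem.
  rewrite /bodies_within -map_cat -filter_cat; apply: Permutation_map.
  have -> : L = filter (within (sval G)) (S ++ L).
    by rewrite filter_cat (filter_Forall_not HS) (filter_Forall HL).
  exact: Permutation_filter.
have /Forall_app [Hta Hsa] := Permutation_Forall hA HPi.
case: (Permutation_cons_cat_inv hD) => [[L1 [L2 [Et hOm]]]|[D1 [D2 [Es hOm]]]];
  have /Forall_app [HOm1 HOm2] := Permutation_Forall hOm HOm.
  have [HBox Hsub] := succ_split_formulas Et.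
  rewrite Et; perm_to (boxes t) (ante t) (A :: Box G b :: L1 ++ L2).
  case hasG: (has (within (sval G)) (boxes s)).
    exact: (diamond_disjunct_complete (t := Sequent (boxes t) (ante t) (L1 ++ L2))
              (conj Hsa HOm2) hasG (free_seq_incl Ht Hsub) (Ht _ HBox) Hta HOm1 prem).
  move/negbT/filter_hasN: hasG => Enil; apply/weakR/derivable_DK_within => //.
  by move: prem; rewrite /bodies_within Enil cats0.
have sat : saturated s.
  split=> //; rewrite Es; move/Forall_app: HOm2 => [H1 H2].
  by apply/Forall_app; split=> //; constructor.
case hasG: (has (within (sval G)) (boxes t)).
  by apply: (box_disjunct_complete sat _ Ht hasG Hta HOm1 prem); rewrite Es in_app_iff /=; tauto.
move/negbT/filter_hasN: hasG => Enil; case: not_provable.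
rewrite /provable Es; perm_to (boxes s) (ante s) (Box G b :: D1 ++ D2).
by apply: derivable_DK_within => //; move: prem; rewrite /bodies_within Enil.
Qed.

Lemma interpolant_complete X : provable X -> interpolated X.
Proof.
case: X => S G D; move: S G D; apply: (derivable_premises_ind (P := interpolated)).
- move=> S S' G G' D D' hS hG hD IHX t Ht [/= h1 h2 h3]; apply: IHX => //.
  by split; [apply: Permutation_trans hS h1 | apply: Permutation_trans hG h2
            | apply: Permutation_trans hD h3].
- exact: interpolated_id.
- exact: interpolated_bot.
- exact: interpolated_left.
- exact: interpolated_right.
- by move=> *; apply: interpolated_DK.
Qed.
End Completeness.

Lemma interpolant_spec : uniform_interpolant s (interpolant s).
Proof.
rewrite /interpolant; case: excluded_middle_informative => [ps|np] /=; first exact: top_interpolant.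
split; first by apply: voc_bounded_big_or => d /disjuncts_sound [].
  by apply: big_orL => d /disjuncts_sound [].
by move=> t Ht H; apply: (interpolant_complete np H) => //; split; exact: Permutation_refl.
Qed.
End Construction.

Lemma ui_spec s : uniform_interpolant s (ui s).
Proof.
elim/smaller_ind: s => s IH; apply: epsilon_spec.
by exists (interpolant s); apply: interpolant_spec.
Qed.
End Interpolation.

Theorem theorem6p18 (Agt : finType) (Hne : 0 < #|Agt|)
    (Sigma : seq (grp Agt * form Agt)) (Gamma Delta : seq (form Agt))
    (p : nat) (a : Agt) :
  exists A : form Agt,
    (forall q, var_occ q A ->
       q <> p /\ exists f, In f (map (@boxed Agt) Sigma ++ Gamma ++ Delta) /\ var_occ q f) /\
    (forall b, agt_occ b A ->
       b <> a /\ exists f, In f (map (@boxed Agt) Sigma ++ Gamma ++ Delta) /\ agt_occ b f) /\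
    derivable Sigma (A :: Gamma) Delta /\
    (forall (Pi Lambda : seq (form Agt)) (Theta : seq (grp Agt * form Agt)),
       (forall f, In f (map (@boxed Agt) Theta ++ Pi ++ Lambda) ->
          ~ var_occ p f /\ ~ agt_occ a f) ->
       derivable (Theta ++ Sigma) (Pi ++ Gamma) (Delta ++ Lambda) ->
       derivable [::] (map (@boxed Agt) Theta ++ Pi) (A :: Lambda)).
Proof.
have [[Vq Vb] D U] := ui_spec p a (Sequent Sigma Gamma Delta).
exists (ui p a (Sequent Sigma Gamma Delta)); do 3 (split => //).
move=> Pi Lambda Theta Hfree d; apply: derivable_boxes_to_ante; rewrite cats0.
apply: (U (Sequent Theta Pi Lambda)) => //.
by rewrite /provable /=; perm_to (Theta ++ Sigma) (Pi ++ Gamma) (Delta ++ Lambda).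
Qed.
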